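(* Let $1\le p<\infty$, $N\ge2$, and for $1\le i\le N$ let $T_i=T_{f_i,\omega^{(i)}}$ be unilateral pseudo-shifts on $\ell^p(\mathbb{N})$ with maps $f_i$ and weights $\omega^{(i)}=(w^{(i)}_{f_i(m)})_m$; let $W^{(i)}_{m,n}=\prod_{\nu=1}^nw^{(i)}_{f_i^\nu(m)}$. The following are equivalent: (i) $T_1,\dots,T_N$ are d-weakly mixing. (ii) $T_1,\dots,T_N$ satisfy the Disjoint Hypercyclicity Criterion. (iii) For each $R\in\mathbb{N}$, the direct sums $\oplus_{r=1}^RT_1,\dots,\oplus_{r=1}^RT_N$ satisfy the Disjoint Blow-up/Collapse Criterion. (iv) There is a strictly increasing sequence $(n_k)$ of positive integers such that (a) $|W^{(i)}_{m,n_k}|\to\infty$ as $k\to\infty$ for all $m\in\mathbb{N}$, $1\le i\le N$; and (b) for each $\epsilon>0$ and $K,M\in\mathbb{N}$ there is $k\ge K$ such that for all $1\le i,\ell\le N$ with $i\ne\ell$: $f_\ell^{n_k}([M])\cap f_i^{n_k}([M])=\emptyset$ and $\left|\frac{W^{(i)}_{f_i^{-n_k}(j),n_k}}{W^{(\ell)}_{f_\ell^{-n_k}(j),n_k}}\right|<\epsilon$ whenever $j\in f_\ell^{n_k}([M])\cap f_i^{n_k}(\mathbb{N}\setminus[M])$.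
   Context: $\mathbb{N}=\{1,2,\dots\}$; $\{e_m\}$ is the canonical basis of $\ell^p(\mathbb{N})$ over $\mathbb{K}\in\{\mathbb{R},\mathbb{C}\}$. For a strictly increasing $f:\mathbb{N}\to\mathbb{N}$ with $f(1)>1$ and a bounded, nonzero sequence of scalars $\omega=(w_{f(m)})_{m}$, $T_{f,\omega}(\sum_m\alpha_me_m)=\sum_mw_{f(m)}\alpha_{f(m)}e_m$. $[M]=\{1,\dots,M\}$, $f^n$ is the $n$-fold composition, $f(A)=\{f(m):m\in A\}$, $f^{-n}$ the inverse of $f^n$ on $f^n(\mathbb{N})$. For operators $S_1,\dots,S_N$ on a Banach space $Y$: they are d-topologically transitive if for all non-empty open $V_0,U_1,\dots,U_N\subset Y$ there is $n$ with $V_0\cap S_1^{-n}(U_1)\cap\cdots\cap S_N^{-n}(U_N)\ne\emptyset$; they are d-weakly mixing if $S_1\oplus S_1,\dots,S_N\oplus S_N$ are d-topologically transitive. They satisfy the Disjoint Hypercyclicity Criterion if there exist a strictly increasing sequence $(n_k)$, dense subsets $Y_0,Y_1,\dots,Y_N$ of $Y$ and maps $S_{j,k}:Y_j\to Y$ ($1\le j\le N$, $k\in\mathbb{N}$) with: $S_i^{n_k}\to0$ pointwise on $Y_0$; $S_{j,k}\to0$ pointwise on $Y_j$; and $S_i^{n_k}S_{j,k}-\delta_{i,j}\mathrm{Id}\to0$ pointwise on $Y_j$, for all $1\le i,j\le N$. They satisfy the Disjoint Blow-up/Collapse Criterion if there exist a strictly increasing $(n_k)$, a dense $Y_0\subset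 Y$ and maps $S_k:\oplus_{i=1}^NY_0\to Y$ with $S_i^{n_k}y\to0$ for all $y\in Y_0$, $1\le i\le N$, and such that for each $\epsilon>0$, $K\in\mathbb{N}$, $y_1,\dots,y_N\in Y_0$ there is $k\ge K$ with $\|S_k(y_1,\dots,y_N)\|<\epsilon$ and $\|S_i^{n_k}S_k(y_1,\dots,y_N)-y_i\|<\epsilon$ for all $i$. *)

From mathcomp Require Import all_boot all_algebra.
From mathcomp Require Import all_classical all_reals all_analysis.
From mathcomp.real_closed Require Import complex.
Set Implicit Arguments. Unset Strict Implicit. Unset Printing Implicit Defensive.
Import GRing.Theory Num.Theory.
Local Open Scope ring_scope.
Local Open Scope classical_set_scope.

Section Generic.
Variables (R : realType) (V : zmodType) (Y : set V) (nrm : V -> R).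

Definition tends0 (u : nat -> R) : Prop :=
  forall e : R, 0 < e -> exists K : nat, forall k, (K <= k)%N -> `|u k| < e.

Definition openY (U : set V) : Prop :=
  U `<=` Y /\
  forall x, U x -> exists2 e : R, 0 < e & forall y, Y y -> nrm (y - x) < e -> U y.

Definition denseY (D : set V) : Prop :=
  D `<=` Y /\
  forall x, Y x -> forall e : R, 0 < e -> exists2 y, D y & nrm (x - y) < e.

Definition incr_seq (n : nat -> nat) : Prop :=
  (0 < n 0)%N /\ forall k, (n k < n k.+1)%N.

Definition d_top_transitive (N : nat) (S : 'I_N -> V -> V) : Prop :=
  forall (V0 : set V) (U : 'I_N -> set V),
    openY V0 -> V0 !=set0 -> (forall i, openY (U i)) -> (forall i, U i !=set0) ->
    exists n : nat, (0 < n)%N /\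
      exists y, V0 y /\ forall i, U i (iter n (S i) y).

Definition DHC (N : nat) (S : 'I_N -> V -> V) : Prop :=
  exists n : nat -> nat, incr_seq n /\
  exists (Y0 : set V) (Yj : 'I_N -> set V) (Sjk : 'I_N -> nat -> V -> V),
    denseY Y0 /\ (forall j, denseY (Yj j)) /\
    (forall j k y, Yj j y -> Y (Sjk j k y)) /\
    (forall i y, Y0 y -> tends0 (fun k => nrm (iter (n k) (S i) y))) /\
    (forall j y, Yj j y -> tends0 (fun k => nrm (Sjk j k y))) /\
    (forall i j y, Yj j y ->
        tends0 (fun k => nrm (iter (n k) (S i) (Sjk j k y)
                              - (if i == j then y else 0)))).

(* Disjoint Blow-up/Collapse Criterion; an element of (+)_{i=1}^N Y0 is
   a family y : 'I_N -> V with y i in Y0 *)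
Definition DBC (N : nat) (S : 'I_N -> V -> V) : Prop :=
  exists n : nat -> nat, incr_seq n /\
  exists (Y0 : set V) (Sk : nat -> ('I_N -> V) -> V),
    denseY Y0 /\
    (forall k (y : 'I_N -> V), (forall i, Y0 (y i)) -> Y (Sk k y)) /\
    (forall i y, Y0 y -> tends0 (fun k => nrm (iter (n k) (S i) y))) /\
    (forall e : R, 0 < e -> forall (K : nat) (y : 'I_N -> V), (forall i, Y0 (y i)) ->
       exists k, (K <= k)%N /\ nrm (Sk k y) < e /\
                 forall i, nrm (iter (n k) (S i) (Sk k y) - y i) < e).

End Generic.

Section DirectSum.
Variables (R : realType) (V : zmodType).

Definition dsumY (Y : set V) (r : nat) : set {ffun 'I_r -> V} :=
  fun y => forall j, Y (y j).

Definition dsum_nrm (nrm : V -> R) (r : nat) (y : {ffun 'I_r -> V}) : R :=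
  \big[Num.max/0]_(j < r) nrm (y j).

Definition dsum_op (r : nat) (S : V -> V) (y : {ffun 'I_r -> V}) : {ffun 'I_r -> V} :=
  [ffun j => S (y j)].


Definition d_weakly_mixing (Y : set V) (nrm : V -> R) (N : nat) (S : 'I_N -> V -> V) :=
  d_top_transitive (@dsumY Y 2) (@dsum_nrm nrm 2) (fun i => @dsum_op 2 (S i)).

End DirectSum.

Arguments dsumY {V} Y r.
Arguments dsum_nrm {R V} nrm r y.
Arguments dsum_op {V} r S y.

Definition cmod (R : realType) (z : R[i]) : R :=
  let: Complex a b := z in Num.sqrt (a ^+ 2 + b ^+ 2).

Inductive is_R_or_C (R : realType) : forall K : fieldType, (K -> R) -> Prop :=
  | scalars_R : @is_R_or_C R R (fun x : R => `|x|)
  | scalars_C : @is_R_or_C R R[i] (@cmod R).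

(* l^p(N) and unilateral pseudo-shifts.  Indices are 0-based: the Rocq *)
(* index m corresponds to the paper's index m+1.                       *)
Section LP.
Variables (R : realType) (K : fieldType) (absK : K -> R) (p : R).

Definition lp_psum (x : nat -> K) (n : nat) : R :=
  \sum_(m < n) (absK (x m)) `^ p.

Definition in_lp (x : nat -> K) : Prop := exists B : R, forall n, lp_psum x n <= B.

Definition lp_norm (x : nat -> K) : R := (sup (range (lp_psum x))) `^ (p^-1).

Definition pseudo_shift (f : nat -> nat) (w : nat -> K) (x : nat -> K) : nat -> K :=
  fun m => w (f m) * x (f m).

Definition pseudo_shift_data (f : nat -> nat) (w : nat -> K) : Prop :=
  (forall m, (f m < f m.+1)%N) /\ (0 < f 0)%N /\
  (exists B : R, forall m, absK (w (f m)) <= B) /\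
  (forall m, w (f m) != 0).

Definition Wprod (f : nat -> nat) (w : nat -> K) (m n : nat) : K :=
  \prod_(1 <= nu < n.+1) w (iter nu f m).

End LP.

Definition cond_iv (R : realType) (K : fieldType) (absK : K -> R) (N : nat)
    (f : 'I_N -> nat -> nat) (w : 'I_N -> nat -> K) : Prop :=
  exists n : nat -> nat, incr_seq n /\
  (forall (i : 'I_N) (m : nat) (B : R), exists K0 : nat, forall k, (K0 <= k)%N ->
       B < absK (Wprod (f i) (w i) m (n k))) /\
  (* (b) ; [M] = {0,...,M-1} 0-based *)
  (forall e : R, 0 < e -> forall K0 M : nat, exists k, (K0 <= k)%N /\
     forall i l : 'I_N, i != l ->
       (forall a b, (a < M)%N -> (b < M)%N ->
            iter (n k) (f l) a <> iter (n k) (f i) b) /\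
       (forall a b, (a < M)%N -> (M <= b)%N ->
            iter (n k) (f l) a = iter (n k) (f i) b ->
            absK (Wprod (f i) (w i) b (n k) / Wprod (f l) (w l) a (n k)) < e)).

(* Condition (iv) makes the weights along the orbits of each [f_i] blow up while
   the orbits of different [f_i] separate.  Given (iv), the map moving a finitely
   supported [y] to [T_j^(-n_k) y] (coordinate [y_a] sent to [f_j^n_k(a)] and
   divided by [W^(j)_(a,n_k)]) is a right inverse of [T_j^n_k] of size [O(1/k)],
   and by the ratio condition [T_i^n_k T_j^(-n_k) = O(1/k)] for [i <> j]: this is
   the Disjoint Hypercyclicity Criterion on finitely supported vectors, and it
   survives finite direct sums.  Either criterion produces a small vector whose
   [n_k]-th iterates under the [T_i] approximate arbitrary targets, hence
   d-transitivity of the 2-fold sums.  Conversely, d-weak mixing applied to a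
   small ball at [0] and to balls around the test vectors [(1_[M], (i+1) 1_[M])]
   yields an [n] with large weights on [[M]]; a point where two orbits meet,
   [f_l^n(a) = f_i^n(b)], would force [|i - l| < 1] if [a, b < M], and forces a
   small weight ratio if [b >= M].  A diagonal choice of such [n] gives (iv). *)

From mathcomp Require Import all_boot all_algebra.
From mathcomp Require Import all_classical all_reals all_analysis.
From mathcomp.real_closed Require Import complex.
From mathcomp Require Import ring lra.
Import GRing.Theory Num.Theory.
Import order.Order.TTheory.
Local Open Scope ring_scope.
Local Open Scope classical_set_scope.
Set Implicit Arguments. Unset Strict Implicit. Unset Printing Implicit Defensive.

(** * Absolute values on the scalar field *)

Record abs_value (R : realType) (K : fieldType) (absK : K -> R) : Prop := AbsValue {
  abs_ge0 : forall a, 0 <= absK a;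
  abs_triangle : forall a b, absK (a + b) <= absK a + absK b;
  absM : forall a b, absK (a * b) = absK a * absK b;
  abs_eq0 : forall a, absK a = 0 -> a = 0;
  absN : forall a, absK (- a) = absK a;
  abs_nat : forall n : nat, absK n%:R = n%:R }.

Lemma is_R_or_C_abs_value (R : realType) (K : fieldType) (absK : K -> R) :
  is_R_or_C absK -> abs_value absK.
Proof.
case.
  split; [exact: normr_ge0|exact: ler_normD|exact: normrM|
          by move=> a /eqP; rewrite normr_eq0 => /eqP|exact: normrN|
          by move=> n; rewrite normr_nat].
have cmodE (z : R[i]) : cmod z = Normc.normc z by case: z.
split=> [a|a b|a b|a|a|n]; rewrite ?cmodE.
- by case: a => x y /=; exact: sqrtr_ge0.
- exact: le_normcD.
- exact: Normc.normcM.
- exact: Normc.eq0_normc.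
- exact: normcN.
- by rewrite -[n%:R]/(1 *+ n) normcMn Normc.normc1.
Qed.

Section AbsValue.
Variables (R : realType) (K : fieldType) (absK : K -> R).
Hypothesis hA : abs_value absK.

Lemma abs0 : absK 0 = 0.
Proof. exact: (abs_nat hA 0). Qed.

Lemma abs1 : absK 1 = 1.
Proof. exact: (abs_nat hA 1). Qed.

Lemma absV a : absK a^-1 = (absK a)^-1.
Proof.
have [->|a0] := eqVneq a 0; first by rewrite invr0 abs0 invr0.
have ha0 : absK a != 0 by apply: contra_neqN a0 => /eqP/(abs_eq0 hA) ->.
by apply: (mulfI ha0); rewrite -(absM hA) !mulfV // abs1.
Qed.

Lemma abs_distC a b : absK (a - b) = absK (b - a).
Proof. by rewrite -(absN hA) opprB. Qed.

Lemma abs_le_dist a b : absK a - absK (a - b) <= absK b.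
Proof. by rewrite lerBlDr -{1}(subrK b a) addrC (abs_triangle hA). Qed.

Lemma abs_natB_ge1 (i l : nat) : i != l -> 1 <= absK (i%:R - l%:R).
Proof.
wlog il : i l / (l < i)%N.
  move=> hw hil; case: (ltngtP l i) => [h|h|h]; first exact: hw.
    by rewrite abs_distC; apply: hw; rewrite // eq_sym.
  by rewrite h eqxx in hil.
by move=> _; rewrite -natrB ?(ltnW il) // (abs_nat hA) ler1n subn_gt0.
Qed.

Lemma abs_gt_of_near1 a eta : absK (a - 1) < eta -> 1 - eta < absK a.
Proof. by move=> ha; have := abs_le_dist 1 a; rewrite abs1 abs_distC; lra. Qed.

Lemma abs_gt_of_mul_near1 a z (L eta : R) : 0 <= L -> eta <= 2^-1 ->
  absK (a * z - 1) < eta -> absK z <= (2 * (L + 1))^-1 -> L < absK a.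
Proof.
move=> L0 eta_half /abs_gt_of_near1; rewrite (absM hA) => haz hz.
have L2 : 0 < 2 * (L + 1) by rewrite mulr_gt0 // ltr_pwDr.
have := ler_wpM2r (ltW L2) hz; rewrite mulVf ?gt_eqF // => hz'.
by have := abs_ge0 hA a; have := abs_ge0 hA z; nra.
Qed.

Lemma abs_div_lt_of_mul_near a b z eta : eta <= 2^-1 ->
  absK (a * z - 1) < eta -> absK (b * z) < eta -> absK (b / a) < 2 * eta.
Proof.
move=> eta_half /abs_gt_of_near1; rewrite !(absM hA) absV => haz hbz.
have a0 : 0 < absK a.
  rewrite lt_neqAle (abs_ge0 hA) andbT; apply/eqP => ha0.
  by move: haz; rewrite -ha0 mul0r; lra.
have := abs_ge0 hA z; have := abs_ge0 hA b.
by rewrite ltr_pdivrMr //; nra.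
Qed.

(* Since [a d = b c]: [ci - cl = (ci - d) + (1 - a) d + (b - 1) c + (c - cl)]. *)
Lemma abs_subr_lt_of_mul_eq (a b c d ci cl : K) (eta B : R) : a * d = b * c ->
  absK (a - 1) < eta -> absK (b - 1) < eta -> absK (c - cl) < eta -> absK (d - ci) < eta ->
  absK ci <= B -> absK cl <= B -> eta <= 1 -> absK (ci - cl) < eta * (2 * B + 4).
Proof.
move=> habcd ha hb hc hd hci hcl eta1.
have -> : ci - cl = (ci - d) + ((1 - a) * d + ((b - 1) * c + (c - cl))).
  have -> : (1 - a) * d + ((b - 1) * c + (c - cl)) = d - a * d + b * c - cl by ring.
  by rewrite habcd; ring.
have near_bound x y : absK (x - y) < eta -> absK y <= B -> absK x <= B + 1.
  by move=> hxy hy; have := abs_triangle hA (x - y) y; rewrite subrK; lra.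
have hdB := near_bound _ _ hd hci; have hcB := near_bound _ _ hc hcl.
have t2 : absK ((1 - a) * d) <= eta * (B + 1).
  by rewrite (absM hA) abs_distC ler_pM ?(abs_ge0 hA) // ltW.
have t3 : absK ((b - 1) * c) <= eta * (B + 1).
  by rewrite (absM hA) ler_pM ?(abs_ge0 hA) // ltW.
have := abs_triangle hA (ci - d) ((1 - a) * d + ((b - 1) * c + (c - cl))).
have := abs_triangle hA ((1 - a) * d) ((b - 1) * c + (c - cl)).
have := abs_triangle hA ((b - 1) * c) (c - cl).
by rewrite abs_distC in hd; lra.
Qed.

End AbsValue.

Lemma tends0E (R : realType) (u : nat -> R) :
  tends0 u <-> forall e, 0 < e -> \forall k \near \oo, `|u k| < e.
Proof. by split=> h e /h [K hK]; exists K. Qed.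

Lemma tends0_near (R : realType) (u : nat -> R) :
  (forall k, 0 <= u k) -> tends0 u -> forall e, 0 < e -> \forall k \near \oo, u k < e.
Proof.
move=> u0 /tends0E hu e /hu; apply: filterS => k.
by rewrite ger0_norm.
Qed.

Lemma tends0_le (R : realType) (u : nat -> R) (C : R) :
  (forall k, 0 <= u k) -> (\forall k \near \oo, u k <= C / k.+1%:R) -> tends0 u.
Proof.
move=> u0 hu; apply/tends0E => e e0; near=> k.
rewrite ger0_norm //; apply: le_lt_trans (_ : C / k.+1%:R < e).
  by near: k.
rewrite ltr_pdivrMr // mulrC -ltr_pdivrMr //.
apply: (@lt_le_trans _ _ k%:R); last by rewrite ler_nat.
near: k; exact: nbhs_infty_gtr.
Unshelve. all: by end_near.
Qed.

Lemma incr_seq_homo (n : nat -> nat) : incr_seq n -> {homo n : a b / (a < b)%N}.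
Proof. by move=> [_ hS]; apply: homo_ltn => //; exact: ltn_trans. Qed.

Lemma incr_seq_gt0 (n : nat -> nat) k : incr_seq n -> (0 < n k)%N.
Proof.
move=> hn; case: k => [|k]; first by case: hn.
exact: leq_ltn_trans (incr_seq_homo hn (ltn0Sn k)).
Qed.

Lemma incr_seq_ge (n : nat -> nat) k : incr_seq n -> (k <= n k)%N.
Proof. by move=> [_ hS]; elim: k => // k IH; exact: leq_ltn_trans IH (hS k). Qed.

Lemma incr_seq_comp (n phi : nat -> nat) : incr_seq n -> incr_seq phi -> incr_seq (n \o phi).
Proof.
move=> hn [_ hphi]; split; first exact: incr_seq_gt0 hn.
by move=> k /=; exact: (incr_seq_homo hn (hphi k)).
Qed.

Lemma incr_seq_choice (P : nat -> nat -> Prop) :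
  (forall k m, exists2 n, (m < n)%N & P k n) ->
  exists n, incr_seq n /\ forall k, P k (n k).
Proof.
move=> hP; have hP' (km : nat * nat) : exists n, (km.2 < n)%N /\ P km.1 n.
  by have [n] := hP km.1 km.2; exists n.
have [g hg] := choice hP'.
pose fix n k := if k is k'.+1 then g (k, n k') else g (0, 0)%N.
exists n; split; last by case=> [|k]; [have [] := hg (0, 0)%N|have [] := hg (k.+1, n k)].
by split=> [|k]; [have [] := hg (0, 0)%N|have [] := hg (k.+1, n k)].
Qed.

(** * The criteria on a seminormed subgroup *)

Section AdditiveMaps.
Variables (V : zmodType) (S : V -> V).
Hypothesis hS : {morph S : x y / x + y}.

Lemma morph_add0 : S 0 = 0.
Proof. by apply: (addrI (S 0)); rewrite -hS !addr0. Qed.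

Lemma morph_add_iter n : {morph iter n S : x y / x + y}.
Proof. by elim: n => [//|n IH] x y /=; rewrite IH hS. Qed.

Lemma morph_add_sum (I : finType) (F : I -> V) : S (\sum_i F i) = \sum_i S (F i).
Proof. by apply: (big_morph S hS morph_add0). Qed.

End AdditiveMaps.

Record seminormed_subgroup (R : realType) (V : zmodType) (Y : set V) (nrm : V -> R) : Prop :=
  SeminormedSubgroup {
    mem0 : Y 0;
    memD : forall x y, Y x -> Y y -> Y (x + y);
    memN : forall x, Y x -> Y (- x);
    nrm0 : nrm 0 = 0;
    nrmD : forall x y, Y x -> Y y -> nrm (x + y) <= nrm x + nrm y;
    nrmN : forall x, nrm (- x) = nrm x;
    nrm_ge0 : forall x, 0 <= nrm x }.

Section SeminormedSubgroup.
Variables (R : realType) (V : zmodType) (Y : set V) (nrm : V -> R).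
Hypothesis hY : seminormed_subgroup Y nrm.

Lemma memB x y : Y x -> Y y -> Y (x - y).
Proof. by move=> hx hy; apply: (memD hY) => //; apply: (memN hY). Qed.

Lemma nrm_distC x y : nrm (x - y) = nrm (y - x).
Proof. by rewrite -(nrmN hY) opprB. Qed.

Lemma nrm_sum (I : finType) (F : I -> V) : (forall i, Y (F i)) ->
  Y (\sum_i F i) /\ nrm (\sum_i F i) <= \sum_i nrm (F i).
Proof.
move=> hF; apply: (big_ind2 (fun a b => Y a /\ nrm a <= b)) => //.
- by split; [exact: (mem0 hY)|rewrite (nrm0 hY)].
- move=> x1 x2 y1 y2 [hx1 hx2] [hy1 hy2]; split; first exact: (memD hY).
  exact: le_trans (nrmD hY hx1 hy1) (lerD hx2 hy2).
Qed.

Lemma nrm_sum_le (I : finType) (F : I -> V) (c : I -> R) : (forall i, Y (F i)) ->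
  (forall i, nrm (F i) <= c i) -> nrm (\sum_i F i) <= \sum_i c i.
Proof. by move=> hF hc; apply: le_trans (proj2 (nrm_sum hF)) (ler_sum _ _). Qed.

Lemma nrm_sum_lt (I : finType) (F : I -> V) e : 0 < e -> (forall i, Y (F i)) ->
  (forall i, nrm (F i) < e / (#|I|%:R + 1)) -> nrm (\sum_i F i) < e.
Proof.
move=> e0 hF hFe; apply: le_lt_trans (nrm_sum_le hF (fun i => ltW (hFe i))) _.
rewrite sumr_const -[X in X < _]mulr_natl mulrA ltr_pdivrMr ?ltr_wpDl //.
by rewrite mulrDr mulr1 mulrC ltrDl.
Qed.

Lemma nrm_tends0_near (u : nat -> V) : tends0 (fun k => nrm (u k)) ->
  forall e, 0 < e -> \forall k \near \oo, nrm (u k) < e.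
Proof. by apply: tends0_near => k; exact: (nrm_ge0 hY). Qed.

Definition ballY c r := [set y | Y y /\ nrm (y - c) < r].

Lemma openY_ballY c r : Y c -> openY Y nrm (ballY c r).
Proof.
move=> hc; split=> [y []//|x [hx hxr]].
exists (r - nrm (x - c)); first by rewrite subr_gt0.
move=> y hy hyx; split=> //; rewrite -(subrK x y) -addrA.
apply: le_lt_trans (nrmD hY (memB hy hx) (memB hx hc)) _.
by rewrite -ltrBrDr.
Qed.

Lemma ballY_neq0 c r : Y c -> 0 < r -> ballY c r !=set0.
Proof. by move=> hc r0; exists c; split=> //; rewrite subrr (nrm0 hY). Qed.

Lemma open_common_radius (I : finType) (U : I -> set V) :
  (forall i, openY Y nrm (U i)) -> (forall i, U i !=set0) ->
  exists u : I -> V, exists2 e, 0 < e &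
    forall i, U i (u i) /\ forall y, Y y -> nrm (y - u i) < e -> U i y.
Proof.
move=> hU hUne.
have hball i : exists ur : V * R, [/\ U i ur.1, 0 < ur.2 &
    forall y, Y y -> nrm (y - ur.1) < ur.2 -> U i y].
  have [u hu] := hUne i; have [r r0 hr] := (proj2 (hU i)) u hu.
  by exists (u, r).
have [ur hur] := choice hball.
exists (fun i => (ur i).1), (\big[Num.min/1]_i (ur i).2).
  by apply: lt_bigmin => // i _; have [] := hur i.
move=> i; have [hu _ hr] := hur i; split => // y hy hyu; apply: hr => //.
exact: lt_le_trans hyu (bigmin_le _ _ _).
Qed.

Variables (N : nat) (S : 'I_N -> V -> V).
Hypothesis hSadd : forall i, {morph S i : x y / x + y}.
Hypothesis hSY : forall i x, Y x -> Y (S i x).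

Lemma iter_mem i n x : Y x -> Y (iter n (S i) x).
Proof. by elim: n => // n IH /IH hx /=; apply: hSY. Qed.

Definition blowup_collapse (n : nat -> nat) (Y0 : set V) (Yj : 'I_N -> set V)
    (Sk : nat -> ('I_N -> V) -> V) :=
  forall e, 0 < e -> forall y0 (y : 'I_N -> V), Y0 y0 -> (forall j, Yj j (y j)) ->
  exists k, [/\ Y (Sk k y), forall i, nrm (iter (n k) (S i) y0) < e,
    nrm (Sk k y) < e & forall i, nrm (iter (n k) (S i) (Sk k y) - y i) < e].

Lemma blowup_collapse_d_top_transitive n Y0 Yj Sk :
  incr_seq n -> denseY Y nrm Y0 -> (forall j, denseY Y nrm (Yj j)) ->
  blowup_collapse n Y0 Yj Sk -> d_top_transitive Y nrm S.
Proof.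
move=> hn hY0 hYj hBC V0 U hV0 hV0ne hU hUne.
pose U' (o : option 'I_N) := if o is Some i then U i else V0.
have [u [e e0 hu]] : exists u : option 'I_N -> V, exists2 e, 0 < e &
    forall o, U' o (u o) /\ forall y, Y y -> nrm (y - u o) < e -> U' o y.
  by apply: open_common_radius; case.
have e3 : 0 < e / 3 by rewrite divr_gt0.
have [hu0 hV0u] := hu None.
have [y0 hy0 dy0] := (proj2 hY0) _ (proj1 hV0 _ hu0) _ e3.
have hyj j : exists y, Yj j y /\ nrm (u (Some j) - y) < e / 3.
  have [huj _] := hu (Some j).
  by have [y hy dy] := (proj2 (hYj j)) _ (proj1 (hU j) _ huj) _ e3; exists y.
have [y hy] := choice hyj.
have y0Y := proj1 hY0 _ hy0.
have yY j : Y (y j) := proj1 (hYj j) _ (proj1 (hy j)).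
have [k [hSkY h0 h1 h2]] := hBC _ e3 y0 y hy0 (fun j => proj1 (hy j)).
exists (n k); split; first exact: incr_seq_gt0.
exists (y0 + Sk k y); split.
  apply: hV0u; first exact: (memD hY).
  have hu0Y : Y (u None) := proj1 hV0 _ hu0.
  rewrite addrAC addrC; apply: le_lt_trans (nrmD hY hSkY (memB y0Y hu0Y)) _.
  by rewrite nrm_distC; move: dy0 h1; lra.
move=> i; have [huY hUu] := hu (Some i); have uY : Y (u (Some i)) := proj1 (hU i) _ huY.
apply: hUu; first by apply: iter_mem; exact: (memD hY).
rewrite morph_add_iter //; set x0 := iter _ _ y0; set x1 := iter _ _ (Sk k y).
have -> : x0 + x1 - u (Some i) = x0 + ((x1 - y i) + (y i - u (Some i))).
  by rewrite -!addrA addKr.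
have hd1 : Y (x1 - y i) by apply: memB; [exact: iter_mem|].
have hd2 : Y (y i - u (Some i)) by exact: memB.
apply: le_lt_trans (nrmD hY (iter_mem _ _ y0Y : Y x0) (memD hY hd1 hd2)) _.
apply: le_lt_trans (lerD (lexx _) (nrmD hY hd1 hd2)) _.
have := proj2 (hy i); rewrite nrm_distC.
by move: (h0 i) (h2 i); lra.
Qed.

Definition dhc_data (n : nat -> nat) (Y0 : set V) (Yj : 'I_N -> set V)
    (Sjk : 'I_N -> nat -> V -> V) :=
  incr_seq n /\ denseY Y nrm Y0 /\ (forall j, denseY Y nrm (Yj j)) /\
  (forall j k y, Yj j y -> Y (Sjk j k y)) /\
  (forall i y, Y0 y -> tends0 (fun k => nrm (iter (n k) (S i) y))) /\
  (forall j y, Yj j y -> tends0 (fun k => nrm (Sjk j k y))) /\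
  (forall i j y, Yj j y -> tends0 (fun k =>
     nrm (iter (n k) (S i) (Sjk j k y) - (if i == j then y else 0)))).

Lemma DHCP : DHC Y nrm S <-> exists n Y0 Yj Sjk, dhc_data n Y0 Yj Sjk.
Proof.
split=> [[n [hn [Y0 [Yj [Sjk hD]]]]]|[n [Y0 [Yj [Sjk [hn hD]]]]]].
  by exists n, Y0, Yj, Sjk.
by exists n; split=> //; exists Y0, Yj, Sjk.
Qed.

Definition dhc_glue (Sjk : 'I_N -> nat -> V -> V) k (y : 'I_N -> V) :=
  \sum_j Sjk j k (y j).

Section DHCData.
Variables (n : nat -> nat) (Y0 : set V) (Yj : 'I_N -> set V) (Sjk : 'I_N -> nat -> V -> V).
Hypothesis hD : dhc_data n Y0 Yj Sjk.

Lemma dhc_glue_mem k y : (forall j, Yj j (y j)) -> Y (dhc_glue Sjk k y).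
Proof. by case: hD => [_ [_ [_ [hSjY _]]]] hy; apply: (proj1 (nrm_sum _)) => j; apply: hSjY. Qed.

Lemma dhc_glue_near y : (forall j, Yj j (y j)) -> forall e, 0 < e ->
  \forall k \near \oo, nrm (dhc_glue Sjk k y) < e /\
    forall i, nrm (iter (n k) (S i) (dhc_glue Sjk k y) - y i) < e.
Proof.
case: hD => [_ [_ [hYj [hSjY [_ [hS0 hSid]]]]]] hy e e0.
pose e' := e / (#|'I_N|%:R + 1).
have e'0 : 0 < e' by rewrite divr_gt0 // ltr_wpDl.
have yY j : Y (y j) := proj1 (hYj j) _ (hy j).
have E1 : \forall k \near \oo, forall j, nrm (Sjk j k (y j)) < e'.
  by apply: filter_forall => j; apply: nrm_tends0_near => //; exact: hS0.
have E2 : \forall k \near \oo, forall ij : 'I_N * 'I_N,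
    nrm (iter (n k) (S ij.1) (Sjk ij.2 k (y ij.2)) - (if ij.1 == ij.2 then y ij.2 else 0)) < e'.
  by apply: filter_forall => ij; apply: nrm_tends0_near => //; exact: hSid.
apply: filterS (filterI E1 E2) => k [H1 H2]; split.
  by apply: nrm_sum_lt => // j; exact: hSjY.
move=> i; have -> : iter (n k) (S i) (dhc_glue Sjk k y) - y i =
    \sum_j (iter (n k) (S i) (Sjk j k (y j)) - (if i == j then y j else 0)).
  rewrite sumrB /dhc_glue (morph_add_sum (morph_add_iter (hSadd i) _)); congr (_ - _).
  by rewrite -big_mkcond (big_pred1 i) // => j; rewrite /= eq_sym.
apply: nrm_sum_lt => // [j|j].
  by apply: memB; [apply: iter_mem; exact: hSjY|case: (i == j); [exact: yY|exact: (mem0 hY)]].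
exact: (H2 (i, j)).
Qed.

Lemma dhc_data_blowup_collapse : blowup_collapse n Y0 Yj (dhc_glue Sjk).
Proof.
move=> e e0 y0 y hy0 hy; case: (hD) => [_ [_ [_ [_ [hS0 _]]]]].
have E0 : \forall k \near \oo, forall i, nrm (iter (n k) (S i) y0) < e.
  apply: filter_forall => i; exact (nrm_tends0_near (hS0 i y0 hy0) e0).
have [k [h0 [h1 h2]]] := filter_ex (filterI E0 (dhc_glue_near hy e0)).
by exists k; split=> //; exact: dhc_glue_mem.
Qed.

End DHCData.

Lemma DHC_d_top_transitive : DHC Y nrm S -> d_top_transitive Y nrm S.
Proof.
case/DHCP=> n [Y0 [Yj [Sjk hD]]]; case: (hD) => [hn [hY0 [hYj _]]].
exact: (blowup_collapse_d_top_transitive hn hY0 hYj (dhc_data_blowup_collapse hD)).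
Qed.

Lemma dhc_data_DBC n Y0 Sjk : dhc_data n Y0 (fun=> Y0) Sjk -> DBC Y nrm S.
Proof.
move=> hD; case: (hD) => [hn [hY0 [_ [_ [hS0 _]]]]].
exists n; split=> //; exists Y0, (dhc_glue Sjk); split=> //; split.
  by move=> k y hy; exact: (dhc_glue_mem hD k hy).
split=> // e e0 K y hy.
have [k [hk [h1 h2]]] := filter_ex (filterI (nbhs_infty_ge K) (dhc_glue_near hD hy e0)).
by exists k.
Qed.

Lemma DBC_d_top_transitive : DBC Y nrm S -> d_top_transitive Y nrm S.
Proof.
move=> [n [hn [Y0 [Sk [hY0 [hSkY [hS0 hBC]]]]]]].
apply: (blowup_collapse_d_top_transitive hn hY0 (fun=> hY0) (Sk := Sk)).
move=> e e0 y0 y hy0 hy.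
have [K _ hK] : \forall k \near \oo, forall i, nrm (iter (n k) (S i) y0) < e.
  apply: filter_forall => i; exact (nrm_tends0_near (hS0 i y0 hy0) e0).
have [k [hk [h1 h2]]] := hBC e e0 K y hy.
by exists k; split=> //; [exact: hSkY|exact: hK].
Qed.

End SeminormedSubgroup.

Section DirectSums.
Variables (R : realType) (V : zmodType) (Y : set V) (nrm : V -> R).
Hypothesis hY : seminormed_subgroup Y nrm.
Variable r : nat.
Local Notation dY := (dsumY Y r).
Local Notation dnrm := (dsum_nrm nrm r).

Lemma dsum_nrm_ge0 (x : {ffun 'I_r -> V}) : 0 <= dnrm x.
Proof. exact: bigmax_ge_id. Qed.

Lemma dsum_nrm_ge (x : {ffun 'I_r -> V}) j : nrm (x j) <= dnrm x.
Proof. exact: le_bigmax. Qed.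

Lemma dsum_nrm_le (x : {ffun 'I_r -> V}) c :
  0 <= c -> (forall j, nrm (x j) <= c) -> dnrm x <= c.
Proof. by move=> c0 h; apply: bigmax_le. Qed.

Lemma dsum_nrm_lt (x : {ffun 'I_r -> V}) c :
  0 < c -> (forall j, nrm (x j) < c) -> dnrm x < c.
Proof. by move=> c0 h; apply: bigmax_lt. Qed.

Lemma seminormed_subgroup_dsum : seminormed_subgroup dY dnrm.
Proof.
split.
- by move=> j; rewrite ffunE; exact: (mem0 hY).
- by move=> x y hx hy j; rewrite ffunE; exact: (memD hY).
- by move=> x hx j; rewrite ffunE; exact: (memN hY).
- by apply/eqP; rewrite eq_le dsum_nrm_ge0 andbT; apply: dsum_nrm_le => // j;
    rewrite ffunE (nrm0 hY).
- move=> x y hx hy; apply: dsum_nrm_le => [|j]; first by rewrite addr_ge0 ?dsum_nrm_ge0.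
  by rewrite ffunE; apply: le_trans (nrmD hY (hx j) (hy j)) (lerD _ _); exact: dsum_nrm_ge.
- move=> x; apply/eqP; rewrite eq_le; apply/andP.
  split; apply: dsum_nrm_le (dsum_nrm_ge0 _) _ => j.
    by rewrite ffunE (nrmN hY); exact: dsum_nrm_ge.
  by rewrite -(nrmN hY) -[- x j](ffunE (fun j => - x j)); exact: dsum_nrm_ge.
- exact: dsum_nrm_ge0.
Qed.

Lemma dsum_op_morph_add (S : V -> V) :
  {morph S : x y / x + y} -> {morph dsum_op r S : x y / x + y}.
Proof. by move=> hS x y; apply/ffunP => j; rewrite !ffunE hS. Qed.

Lemma dsum_op_mem (S : V -> V) : (forall x, Y x -> Y (S x)) ->
  forall x, dY x -> dY (dsum_op r S x).
Proof. by move=> hS x hx j; rewrite ffunE; apply: hS. Qed.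

Lemma iter_dsum_op (S : V -> V) n x : iter n (dsum_op r S) x = [ffun j => iter n S (x j)].
Proof.
elim: n => [|n IH] /=; first by apply/ffunP => j; rewrite ffunE.
by rewrite IH; apply/ffunP => j; rewrite !ffunE.
Qed.

Lemma tends0_dsum_nrm (F : nat -> {ffun 'I_r -> V}) :
  (forall j, tends0 (fun k => nrm (F k j))) -> tends0 (fun k => dnrm (F k)).
Proof.
move=> hF; apply/tends0E => e e0.
have : \forall k \near \oo, forall j, nrm (F k j) < e.
  apply: filter_forall => j; exact (nrm_tends0_near hY (hF j) e0).
apply: filterS => k hk; rewrite ger0_norm ?dsum_nrm_ge0 //.
exact: dsum_nrm_lt.
Qed.

Lemma denseY_dsum (D : set V) : denseY Y nrm D -> denseY dY dnrm (dsumY D r).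
Proof.
move=> [hDY hD]; split=> [x hx j|x hx e e0]; first exact: hDY.
have hc j : exists y, D y /\ nrm (x j - y) < e.
  by have [y hy hyd] := hD (x j) (hx j) e e0; exists y.
have [y hy] := choice hc.
exists [ffun j => y j]; first by move=> j; rewrite ffunE; exact: (proj1 (hy j)).
by apply: dsum_nrm_lt => // j; rewrite !ffunE; exact: (proj2 (hy j)).
Qed.

Lemma dhc_data_dsum (N : nat) (S : 'I_N -> V -> V) n Y0 Yj Sjk :
  dhc_data Y nrm S n Y0 Yj Sjk ->
  dhc_data dY dnrm (fun i => dsum_op r (S i)) n (dsumY Y0 r) (fun j => dsumY (Yj j) r)
    (fun j k (y : {ffun 'I_r -> V}) => [ffun c => Sjk j k (y c)]).
Proof.
move=> [hn [hY0 [hYj [hSjY [hS0 [hSj hSid]]]]]].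
split=> //; split; first exact: denseY_dsum.
split; first by move=> j; exact: denseY_dsum.
split; first by move=> j k y hy c; rewrite ffunE; apply: hSjY.
split.
  move=> i y hy; apply: tends0_dsum_nrm => j.
  by under eq_fun do rewrite iter_dsum_op ffunE; exact: hS0.
split.
  by move=> j y hy; apply: tends0_dsum_nrm => c; under eq_fun do rewrite ffunE; exact: hSj.
move=> i j y hy; apply: tends0_dsum_nrm => c.
under eq_fun do rewrite iter_dsum_op !ffunE (fun_if (fun z : {ffun _} => z c)) ffunE.
exact: hSid.
Qed.

End DirectSums.

Section DirectSumCriteria.
Variables (R : realType) (V : zmodType) (Y : set V) (nrm : V -> R).
Hypothesis hY : seminormed_subgroup Y nrm.
Variables (N : nat) (S : 'I_N -> V -> V).
Hypothesis hSadd : forall i, {morph S i : x y / x + y}.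
Hypothesis hSY : forall i x, Y x -> Y (S i x).

Let hdY r := seminormed_subgroup_dsum hY r.
Let hdSadd r i := dsum_op_morph_add (r := r) (hSadd i).
Let hdSY r i := dsum_op_mem (r := r) (hSY i).

Lemma DHC_d_weakly_mixing : DHC Y nrm S -> d_weakly_mixing Y nrm S.
Proof.
case/DHCP=> n [Y0 [Yj [Sjk /(dhc_data_dsum hY 2) hD2]]].
have hDHC2 : DHC (dsumY Y 2) (dsum_nrm nrm 2) (fun i => dsum_op 2 (S i)).
  by apply/DHCP; do 4!eexists; exact: hD2.
exact: (DHC_d_top_transitive (hdY 2) (@hdSadd 2) (@hdSY 2) hDHC2).
Qed.

Lemma DBC_d_weakly_mixing :
  DBC (dsumY Y 2) (dsum_nrm nrm 2) (fun i => dsum_op 2 (S i)) -> d_weakly_mixing Y nrm S.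
Proof. exact: (DBC_d_top_transitive (hdY 2) (@hdSadd 2) (@hdSY 2)). Qed.

Lemma dhc_data_DBC_dsum r n Y0 Sjk : dhc_data Y nrm S n Y0 (fun=> Y0) Sjk ->
  DBC (dsumY Y r) (dsum_nrm nrm r) (fun i => dsum_op r (S i)).
Proof. by move=> /(dhc_data_dsum hY r); exact: (dhc_data_DBC (hdY r) (@hdSadd r) (@hdSY r)). Qed.

End DirectSumCriteria.

(** * The space l^p *)

Lemma sum_ord_pred1 (V : zmodType) (T a : nat) (F : nat -> V) :
  \sum_(m < T) (if (m : nat) == a then F m else 0) = if (a < T)%N then F a else 0.
Proof.
elim: T => [|T IH]; first by rewrite big_ord0.
rewrite big_ord_recr /= IH; case: (ltnP a T) => [aT | Ta].
  by rewrite (ltn_trans aT (ltnSn T)) (gtn_eqF aT) addr0.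
have [-> | neq] := eqVneq T a; first by rewrite ltnSn add0r.
by rewrite ltnS leqNgt ltn_neqAle neq Ta addr0.
Qed.

Section Lp.
Variables (R : realType) (K : fieldType) (absK : K -> R) (p : R).
Hypothesis hA : abs_value absK.
Hypothesis hp : 1 <= p.
Local Notation psum := (lp_psum absK p).
Local Notation Y := (in_lp absK p).
Local Notation nrm := (lp_norm absK p).

Definition lp_sup x := sup (range (psum x)).

Lemma lp_normE x : nrm x = lp_sup x `^ p^-1.
Proof. by []. Qed.

Let p_gt0 : 0 < p. Proof. exact: lt_le_trans ltr01 hp. Qed.
Let p_neq0 : p != 0. Proof. by rewrite gt_eqF. Qed.

Lemma powRpK a : 0 <= a -> (a `^ p) `^ p^-1 = a.
Proof. by move=> a0; rewrite -powRrM mulfV // powRr1. Qed.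

Lemma powRKp a : 0 <= a -> (a `^ p^-1) `^ p = a.
Proof. by move=> a0; rewrite -powRrM mulVf // powRr1. Qed.

Lemma powRp_le a b : 0 <= a -> a <= b -> a `^ p <= b `^ p.
Proof.
move=> a0 ab; apply: (ge0_ler_powR (ltW p_gt0)) => //; rewrite nnegrE //.
exact: le_trans ab.
Qed.

Lemma powRVp_le a b : 0 <= a -> a <= b -> a `^ p^-1 <= b `^ p^-1.
Proof.
move=> a0 ab; apply: (ge0_ler_powR (ltW _)) => //; rewrite ?invr_gt0 // nnegrE //.
exact: le_trans ab.
Qed.

Lemma powRVp_lt a b : 0 <= a -> a < b -> a `^ p^-1 < b `^ p^-1.
Proof.
move=> a0 ab; apply: gt0_ltr_powR => //; rewrite ?invr_gt0 // nnegrE //.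
exact: le_trans (ltW ab).
Qed.

Lemma lp_psum_ge0 x n : 0 <= psum x n.
Proof. by apply: sumr_ge0 => i _; exact: powR_ge0. Qed.

Lemma lp_psumS x n : psum x n.+1 = psum x n + absK (x n) `^ p.
Proof. by rewrite /lp_psum big_ord_recr. Qed.

Lemma has_sup_lp_psum x : Y x -> has_sup (range (psum x)).
Proof.
by case=> B hB; split; [exists (psum x 0), 0%N | exists B => _ [n _ <-]].
Qed.

Lemma lp_psum_le_sup x n : Y x -> psum x n <= lp_sup x.
Proof. by move=> /has_sup_lp_psum hs; apply: sup_upper_bound => //; exists n. Qed.

Lemma lp_sup_le x B : (forall n, psum x n <= B) -> lp_sup x <= B.
Proof. by move=> hB; apply: ge_sup; [exists (psum x 0), 0%N | move=> _ [n _ <-]]. Qed.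

Lemma lp_sup_ge0 x : Y x -> 0 <= lp_sup x.
Proof. by move=> hx; apply: le_trans (lp_psum_le_sup 0 hx); exact: lp_psum_ge0. Qed.

Lemma lp_norm_ge0 x : 0 <= nrm x.
Proof. exact: powR_ge0. Qed.

Lemma lp_norm_powR x : Y x -> nrm x `^ p = lp_sup x.
Proof. by move=> hx; rewrite powRKp // lp_sup_ge0. Qed.

Lemma lp_norm_le x e : 0 <= e -> (forall n, psum x n <= e `^ p) -> nrm x <= e.
Proof.
move=> e0 h; rewrite lp_normE -(powRpK e0); apply: powRVp_le.
  by apply: lp_sup_ge0; exists (e `^ p).
exact: lp_sup_le.
Qed.

Lemma lp_norm_lt x c e : 0 < e -> (forall n, psum x n <= c) -> c < e `^ p -> nrm x < e.
Proof.
move=> e0 hc ce; have c0 : 0 <= c := le_trans (lp_psum_ge0 x 0) (hc 0%N).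
apply: le_lt_trans (lp_norm_le (powR_ge0 c p^-1) _) _ => [n|].
  by rewrite powRKp.
by rewrite -(powRpK (ltW e0)); exact: powRVp_lt.
Qed.

Lemma abs_le_lp_norm x t : Y x -> absK (x t) <= nrm x.
Proof.
move=> hx; rewrite lp_normE -(powRpK (abs_ge0 hA (x t))); apply: powRVp_le.
  exact: powR_ge0.
by apply: le_trans (lp_psum_le_sup t.+1 hx); rewrite lp_psumS lerDr lp_psum_ge0.
Qed.

Lemma lp_norm_eq0 x : Y x -> nrm x = 0 -> x = 0.
Proof.
move=> hx h0; apply/funext => t; apply: (abs_eq0 hA); apply/eqP.
by rewrite eq_le abs_ge0 // andbT -h0 abs_le_lp_norm.
Qed.

Lemma lp_psum0 n : psum 0 n = 0.
Proof. by apply: big1 => i _; rewrite /= (abs0 hA) powR0. Qed.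

Lemma lp_norm0 : nrm 0 = 0.
Proof.
apply/eqP; rewrite eq_le lp_norm_ge0 andbT; apply: lp_norm_le => // n.
by rewrite lp_psum0 powR_ge0.
Qed.

Lemma lp_psumN x n : psum (- x) n = psum x n.
Proof. by apply: eq_bigr => i _; rewrite /= (absN hA). Qed.

Lemma powR_convex (l a b : R) : 0 <= l <= 1 -> 0 <= a -> 0 <= b ->
  (l * a + (1 - l) * b) `^ p <= l * a `^ p + (1 - l) * b `^ p.
Proof.
move=> /andP[l0 l1] a0 b0; have := @convex_powR R p hp (Itv01 l0 l1) a b.
by rewrite !inE /= !in_itv /= !andbT => /(_ a0 b0); rewrite !convRE.
Qed.

Lemma powR_divr a b : 0 <= a -> 0 <= b -> (a / b) `^ p = a `^ p / b `^ p.
Proof.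
move=> a0 b0; rewrite powRM ?invr_ge0 // -[b^-1]powR_inv1 // powRAC.
by rewrite powR_inv1 ?powR_ge0.
Qed.

Lemma divDl_itv01 (al be : R) : 0 < al -> 0 < be -> 0 <= al / (al + be) <= 1.
Proof.
move=> al0 be0; have ab0 : 0 < al + be := addr_gt0 al0 be0.
apply/andP; split; first by rewrite divr_ge0 ?ltW.
by rewrite ler_pdivrMr // mul1r lerDl ltW.
Qed.

(* Convexity of [t `^ p] at the point [a + b = (al + be) (l (a/al) + (1-l) (b/be))]. *)
Lemma powRD_le a b al be : 0 <= a -> 0 <= b -> 0 < al -> 0 < be ->
  (a + b) `^ p <= (al + be) `^ p *
    (al / (al + be) * (a `^ p / al `^ p) + be / (al + be) * (b `^ p / be `^ p)).
Proof.
move=> a0 b0 al0 be0; have ab0 : 0 < al + be := addr_gt0 al0 be0.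
have lE : be / (al + be) = 1 - al / (al + be) by field; rewrite gt_eqF.
have l01 := divDl_itv01 al0 be0.
have -> : a + b = (al + be) * (al / (al + be) * (a / al) + be / (al + be) * (b / be)).
  by field; rewrite !gt_eqF.
rewrite powRM ?(ltW ab0) //; last first.
  by apply: addr_ge0; apply: mulr_ge0; apply: divr_ge0 => //; apply: ltW.
have [al0' be0'] := (ltW al0, ltW be0).
rewrite ler_pM2l ?powR_gt0 // -!powR_divr // lE.
by apply: powR_convex => //; exact: divr_ge0.
Qed.

Lemma lp_psumD_le al be x y n : 0 < al -> 0 < be ->
  psum x n <= al `^ p -> psum y n <= be `^ p -> psum (x + y) n <= (al + be) `^ p.
Proof.
move=> al0 be0 hx hy; set l := al / (al + be).
have ab0 : 0 < al + be := addr_gt0 al0 be0.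
have lE : be / (al + be) = 1 - l by rewrite /l; field; rewrite gt_eqF.
have l01 : 0 <= l <= 1 := divDl_itv01 al0 be0.
apply: (@le_trans _ _ ((al + be) `^ p *
    (l * (psum x n / al `^ p) + be / (al + be) * (psum y n / be `^ p)))).
  rewrite /lp_psum !mulr_suml !mulr_sumr -big_split mulr_sumr /=.
  apply: ler_sum => m _; apply: le_trans (powRD_le _ _ al0 be0); rewrite ?abs_ge0 //.
  by apply: powRp_le; [exact: abs_ge0 | exact: abs_triangle].
have hX : psum x n / al `^ p <= 1 by rewrite ler_pdivrMr ?powR_gt0 // mul1r.
have hY : psum y n / be `^ p <= 1 by rewrite ler_pdivrMr ?powR_gt0 // mul1r.
have X0 : 0 <= psum x n / al `^ p by rewrite divr_ge0 ?lp_psum_ge0 ?powR_ge0.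
have Y0 : 0 <= psum y n / be `^ p by rewrite divr_ge0 ?lp_psum_ge0 ?powR_ge0.
rewrite lE -[X in _ <= X]mulr1 ler_pM2l ?powR_gt0 //.
by case/andP: l01; move: hX hY X0 Y0; nra.
Qed.

Lemma lp_minkowski x y : Y x -> Y y -> Y (x + y) /\ nrm (x + y) <= nrm x + nrm y.
Proof.
move=> hx hy.
have [/(lp_norm_eq0 hx) -> | ax0] := eqVneq (nrm x) 0.
  by rewrite add0r lerDr lp_norm_ge0.
have [/(lp_norm_eq0 hy) -> | by0] := eqVneq (nrm y) 0.
  by rewrite addr0 lerDl lp_norm_ge0.
have al0 : 0 < nrm x by rewrite lt_neqAle eq_sym ax0 lp_norm_ge0.
have be0 : 0 < nrm y by rewrite lt_neqAle eq_sym by0 lp_norm_ge0.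
have key n : psum (x + y) n <= (nrm x + nrm y) `^ p.
  by apply: lp_psumD_le; rewrite // lp_norm_powR //; exact: lp_psum_le_sup.
split; first by exists ((nrm x + nrm y) `^ p).
by apply: lp_norm_le => //; rewrite addr_ge0 ?lp_norm_ge0.
Qed.

Lemma lp_seminormed_subgroup : seminormed_subgroup Y nrm.
Proof.
split.
- by exists 0 => n; rewrite lp_psum0.
- by move=> x y hx hy; case: (lp_minkowski hx hy).
- by move=> x [B hB]; exists B => n; rewrite lp_psumN.
- exact: lp_norm0.
- by move=> x y hx hy; case: (lp_minkowski hx hy).
- move=> x; rewrite !lp_normE /lp_sup; congr (sup _ `^ _); apply/funext => z /=.
  by apply/propext; split=> -[n _ <-]; exists n => //; rewrite lp_psumN.
- exact: lp_norm_ge0.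
Qed.

Lemma lp_norm_supp1 x m0 : (forall m, m <> m0 -> x m = 0) ->
  Y x /\ nrm x = absK (x m0).
Proof.
move=> hx; have hps n : psum x n = if (m0 < n)%N then absK (x m0) `^ p else 0.
  rewrite /lp_psum -(sum_ord_pred1 _ _ (fun m => absK (x m) `^ p)).
  apply: eq_bigr => m _; case: eqP => [-> //| /hx ->].
  by rewrite (abs0 hA) powR0.
have hb n : psum x n <= absK (x m0) `^ p.
  by rewrite hps; case: ifP => // _; exact: powR_ge0.
have hY : Y x by exists (absK (x m0) `^ p).
split=> //; apply/eqP; rewrite eq_le lp_norm_le ?abs_ge0 //=.
rewrite lp_normE -{1}(powRpK (abs_ge0 hA (x m0))); apply: powRVp_le; first exact: powR_ge0.
by have := lp_psum_le_sup m0.+1 hY; rewrite hps ltnSn.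
Qed.

Definition single (a : nat) (c : K) : nat -> K := fun t => if t == a then c else 0.

Lemma single_lp a c : Y (single a c) /\ nrm (single a c) = absK c.
Proof.
have [|hY ->] := @lp_norm_supp1 (single a c) a; last by rewrite /single eqxx.
by move=> m /eqP hm; rewrite /single (negbTE hm).
Qed.

Definition fin_supp (y : nat -> K) := exists B, forall t, (B <= t)%N -> y t = 0.

Lemma fin_supp_decomp y B : (forall t, (B <= t)%N -> y t = 0) ->
  y = \sum_(a < B) single a (y a).
Proof.
move=> hy; apply/funext => t; rewrite fct_sumE.
rewrite (eq_bigr (fun a : 'I_B => if (a : nat) == t then y a else 0)); last first.
  by move=> a _; rewrite /single eq_sym; case: eqP => // ->.
by rewrite sum_ord_pred1; case: ltnP => // /hy.
Qed.

Lemma fin_supp_lp y : fin_supp y -> Y y.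
Proof.
move=> [B hB]; rewrite (fin_supp_decomp hB).
by apply: (proj1 (nrm_sum lp_seminormed_subgroup _)) => a; case: (single_lp a (y a)).
Qed.

Lemma fin_supp_dense : denseY Y nrm fin_supp.
Proof.
split=> [y|x hx e e0]; first exact: fin_supp_lp.
have [_ [B _ <-] hB] := sup_adherent (powR_gt0 p e0) (has_sup_lp_psum hx).
pose y t := if (t < B)%N then x t else 0.
exists y; first by exists B => t hBt; rewrite /y ltnNge hBt.
have hz t : (x - y) t = if (t < B)%N then 0 else x t.
  by change (x t - y t = if (t < B)%N then 0 else x t); rewrite /y; case: ifP => _; rewrite ?subrr ?subr0.
have hz0 n : (n <= B)%N -> psum (x - y) n = 0.
  elim: n => [|n IH] hn; first by rewrite /lp_psum big_ord0.
  by rewrite lp_psumS IH ?(ltnW hn) // hz hn (abs0 hA) powR0 // addr0.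
have hzB n : (B <= n)%N -> psum (x - y) n = psum x n - psum x B.
  move=> /subnK <-; elim: (n - B)%N => [|k IH]; first by rewrite add0n hz0 // subrr.
  by rewrite addSn !lp_psumS IH hz ltnNge leq_addl /= addrAC.
apply: (lp_norm_lt e0 (c := lp_sup x - psum x B)); last by rewrite ltrBlDr -ltrBlDl.
move=> n; case: (leqP n B) => hn.
  by rewrite hz0 // subr_ge0; exact: lp_psum_le_sup.
by rewrite hzB ?(ltnW hn) // lerD2r; exact: lp_psum_le_sup.
Qed.

End Lp.

(** * Unilateral pseudo-shifts *)

Lemma pseudo_shift_morph_add (K : fieldType) (f : nat -> nat) (w : nat -> K) :
  {morph pseudo_shift f w : x y / x + y}.
Proof. by move=> x y; apply/funext => m; rewrite /pseudo_shift /= mulrDr. Qed.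

Section PseudoShift.
Variables (R : realType) (K : fieldType) (absK : K -> R) (p : R).
Hypothesis hA : abs_value absK.
Hypothesis hp : 1 <= p.
Local Notation psum := (lp_psum absK p).
Local Notation Y := (in_lp absK p).
Local Notation nrm := (lp_norm absK p).
Variables (f : nat -> nat) (w : nat -> K).
Hypothesis hd : pseudo_shift_data absK f w.
Local Notation T := (pseudo_shift f w).
Local Notation W := (Wprod f w).

Lemma map_homo : {homo f : a b / (a < b)%N}.
Proof. by case: hd => hinc _; apply: homo_ltn => //; exact: ltn_trans. Qed.

Lemma map_gt m : (m < f m)%N.
Proof.
case: hd => hinc [h0 _].
by elim: m => // m IH; exact: leq_ltn_trans IH (hinc m).
Qed.

Lemma iter_map_ge n m : (m + n <= iter n f m)%N.
Proof.
elim: n => [|n IH] /=; first by rewrite addn0.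
by rewrite addnS; exact: leq_ltn_trans IH (map_gt _).
Qed.

Lemma iter_map_inj n : injective (iter n f).
Proof.
have f_inj : injective f := incn_inj (leq_mono map_homo).
by elim: n => // n IH a b /= /f_inj; exact: IH.
Qed.

Lemma WprodS m n : W m n.+1 = w (f m) * W (f m) n.
Proof.
rewrite /Wprod big_nat_recl //; congr (_ * _).
by apply: eq_bigr => i _; rewrite -iterSr.
Qed.

Lemma iter_pseudo_shift n x m : iter n T x m = W m n * x (iter n f m).
Proof.
elim: n m => [|n IH] m /=; first by rewrite /Wprod big_geq // mul1r.
by rewrite /pseudo_shift IH WprodS mulrA -iterSr.
Qed.

Lemma Wprod_neq0 m n : W m n != 0.
Proof.
case: hd => _ [_ [_ hw]].
elim: n m => [|n IH] m; first by rewrite /Wprod big_geq // oner_eq0.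
by rewrite WprodS mulf_neq0.
Qed.

Lemma sum_comp_map_le (g : nat -> R) n : (forall t, 0 <= g t) ->
  \sum_(m < n) g (f m) <= \sum_(t < f n) g t.
Proof.
move=> g0; elim: n => [|n IH]; first by rewrite big_ord0 sumr_ge0.
rewrite big_ord_recr /=.
apply: (@le_trans _ _ (\sum_(t < (f n).+1) g t)); first by rewrite big_ord_recr /= lerD2r.
rewrite -(subnK (map_homo (ltnSn n))) addnC.
elim: (f n.+1 - (f n).+1)%N => [|k IHk]; first by rewrite addn0.
by rewrite addnS [in X in _ <= X]big_ord_recr /=; apply: le_trans IHk _; rewrite lerDl.
Qed.

Lemma pseudo_shift_lp x : Y x -> Y (T x).
Proof.
move=> hx; case: hd => _ [_ [[B hB] _]].
have B0 : 0 <= B by apply: le_trans (hB 0%N); exact: abs_ge0.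
exists (B `^ p * lp_sup absK p x) => n.
apply: (@le_trans _ _ (\sum_(m < n) B `^ p * absK (x (f m)) `^ p)).
  apply: ler_sum => m _; rewrite /pseudo_shift (absM hA) powRM ?abs_ge0 //.
  by apply: ler_wpM2r; [exact: powR_ge0 | apply: powRp_le; rewrite ?abs_ge0].
rewrite -mulr_sumr; apply: ler_wpM2l; first exact: powR_ge0.
apply: le_trans (lp_psum_le_sup (f n) hx).
by apply: (@sum_comp_map_le (fun t => absK (x t) `^ p)) => t; exact: powR_ge0.
Qed.

(* The inverse of [T^n] on finitely supported vectors: the coordinate [y a] is
   moved to position [f^n a] and divided by [W a n]; only [a <= t] can land on [t]. *)
Definition shift_rinv n (y : nat -> K) : nat -> K :=
  fun t => \sum_(a < t.+1) (if iter n f a == t then y a / W a n else 0).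

Lemma shift_rinv_morph_add n : {morph shift_rinv n : x y / x + y}.
Proof.
move=> x y; apply/funext => t.
change (shift_rinv n (x + y) t = shift_rinv n x t + shift_rinv n y t).
rewrite /shift_rinv -big_split /=.
by apply: eq_bigr => a _; case: ifP => _; rewrite ?addr0 // mulrDl.
Qed.

Lemma shift_rinv_single n a c : shift_rinv n (single a c) = single (iter n f a) (c / W a n).
Proof.
apply/funext => t; rewrite /shift_rinv /single.
case: eqP => [-> | /eqP ht].
  rewrite (eq_bigr (fun b : 'I__ => if (b : nat) == a then c / W a n else 0)).
    by rewrite (@sum_ord_pred1 _ _ a (fun=> c / W a n)) ltnS (leq_trans (leq_addr n a) (iter_map_ge n a)).
  move=> b _; have [-> | hba] := eqVneq (b : nat) a; first by rewrite !eqxx.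
  by case: eqP => // /iter_map_inj hb; rewrite hb eqxx in hba.
apply: big1 => b _; case: eqP => // hb; case: eqP => [hba | _]; last by rewrite mul0r.
by rewrite -hb hba eqxx in ht.
Qed.

Lemma iter_pseudo_shift_single n b c :
  iter n T (single b c) = fun m => if iter n f m == b then W m n * c else 0.
Proof.
by apply/funext => m; rewrite iter_pseudo_shift /single; case: eqP => _ //; rewrite mulr0.
Qed.

Lemma iter_pseudo_shift_single_hit n m c :
  Y (iter n T (single (iter n f m) c)) /\
  nrm (iter n T (single (iter n f m) c)) = absK (W m n * c).
Proof.
rewrite iter_pseudo_shift_single.
have [|hY ->] := lp_norm_supp1 hA hp (x := fun m' => if iter n f m' == iter n f m
    then W m' n * c else 0) (m0 := m); last by rewrite eqxx.
by move=> m' hm'; case: eqP => // /iter_map_inj.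
Qed.

Lemma iter_pseudo_shift_single_miss n t c :
  (forall m, iter n f m <> t) -> iter n T (single t c) = 0.
Proof.
move=> ht; rewrite iter_pseudo_shift_single; apply/funext => m /=.
by case: eqP => // /ht.
Qed.

Lemma iter_pseudo_shift_supp n y : (forall t, (n <= t)%N -> y t = 0) -> iter n T y = 0.
Proof.
move=> hy; apply/funext => m; rewrite iter_pseudo_shift hy ?mulr0 //.
exact: leq_trans (leq_addl _ _) (iter_map_ge n m).
Qed.

Lemma shift_rinv_decomp n y B : (forall t, (B <= t)%N -> y t = 0) ->
  shift_rinv n y = \sum_(a < B) single (iter n f a) (y a / W a n).
Proof.
move=> hy; rewrite {1}(fin_supp_decomp hy) (morph_add_sum (shift_rinv_morph_add n)).
by apply: eq_bigr => a _; exact: shift_rinv_single.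
Qed.

Lemma shift_rinv_lp n y : fin_supp y -> Y (shift_rinv n y).
Proof.
move=> [B hB]; rewrite (shift_rinv_decomp n hB).
apply: (proj1 (nrm_sum (lp_seminormed_subgroup hA hp) _)) => a.
exact: (proj1 (single_lp hA hp _ _)).
Qed.

Lemma iter_shift_rinv n y : fin_supp y -> iter n T (shift_rinv n y) = y.
Proof.
move=> [B hB].
rewrite (shift_rinv_decomp n hB) (morph_add_sum (morph_add_iter (pseudo_shift_morph_add f w) n)).
rewrite [RHS](fin_supp_decomp hB); apply: eq_bigr => a _.
rewrite iter_pseudo_shift_single; apply/funext => m; rewrite /single.
case: eqP => [/iter_map_inj -> | hm]; first by rewrite eqxx mulrC divfK ?Wprod_neq0.
by case: eqP => // hma; rewrite hma in hm.
Qed.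

End PseudoShift.

(** * Condition (iv) implies the criteria *)

Section Separation.
Variables (R : realType) (K : fieldType) (absK : K -> R).
Variables (N : nat) (f : 'I_N -> nat -> nat) (w : 'I_N -> nat -> K).
Local Notation W i := (Wprod (f i) (w i)).

Definition separating (M : nat) (L eps : R) (n : nat) :=
  (forall i m, (m < M)%N -> L < absK (W i m n)) /\
  (forall i l : 'I_N, i != l ->
     (forall a b, (a < M)%N -> (b < M)%N -> iter n (f l) a <> iter n (f i) b) /\
     (forall a b, (a < M)%N -> (M <= b)%N -> iter n (f l) a = iter n (f i) b ->
        absK (W i b n / W l a n) < eps)).

Definition separating_seq (n : nat -> nat) :=
  incr_seq n /\ forall k, separating k.+1 k.+1%:R k.+1%:R^-1 (n k).

Lemma cond_iv_separating_seq : cond_iv absK f w -> exists n, separating_seq n.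
Proof.
move=> [n [hn [ha hb]]].
have [phi [hphi hsep]] : exists phi, incr_seq phi /\
    forall k, separating k.+1 k.+1%:R k.+1%:R^-1 (n (phi k)).
  apply: (incr_seq_choice (P := fun k k' => separating k.+1 k.+1%:R k.+1%:R^-1 (n k'))).
  move=> k m.
  have [K1 _ hK1] : \forall k' \near \oo, forall im : 'I_N * 'I_k.+1,
      k.+1%:R < absK (W im.1 im.2 (n k')).
    by apply: filter_forall => -[i m']; have [K0 hK0] := ha i m' k.+1%:R; exists K0.
  have ek : 0 < k.+1%:R^-1 :> R by rewrite invr_gt0.
  have [k' [hk' hb']] := hb _ ek (maxn m.+1 K1) k.+1.
  exists k'; first exact: leq_trans (leq_maxl _ _) hk'.
  split=> [i m' hm'|]; last exact: hb'.
  exact: (hK1 k' (leq_trans (leq_maxr _ _) hk') (i, Ordinal hm')).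
by exists (n \o phi); split; [exact: incr_seq_comp | exact: hsep].
Qed.

Lemma separating_seq_cond_iv n : separating_seq n -> cond_iv absK f w.
Proof.
move=> [hn hsep]; exists n; split=> //; split.
  move=> i m B; have [K0 _ hK0] := filterI (nbhs_infty_ge m) (nbhs_infty_gtr B).
  exists K0 => k /hK0 [hmk hBk]; apply: lt_trans ((hsep k).1 i m _); last by rewrite ltnS.
  by apply: lt_le_trans hBk _; rewrite ler_nat.
move=> e e0 K0 M.
have [k [[hK0k hMk] hek]] := filter_ex (filterI (filterI (nbhs_infty_ge K0)
  (nbhs_infty_ge M)) (nbhs_infty_gtr e^-1)).
exists k; split=> // i l hil; have [hdisj hratio] := (hsep k).2 i l hil.
have hMk1 : (M <= k.+1)%N := leq_trans hMk (leqnSn k).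
split=> [a b ha hb|a b ha hb hab].
  by apply: hdisj; exact: leq_trans hMk1.
have hak : (a < k.+1)%N := leq_trans ha hMk1.
case: (ltnP b k.+1) => hbk; first by case: (hdisj a b hak hbk hab).
apply: lt_le_trans (hratio a b hak hbk hab) _.
rewrite -(invrK e) lef_pV2 ?posrE ?invr_gt0 //.
by apply: ltW; apply: lt_le_trans hek _; rewrite ler_nat.
Qed.

Lemma cond_ivP : cond_iv absK f w <-> exists n, separating_seq n.
Proof.
by split=> [/cond_iv_separating_seq // | [n /separating_seq_cond_iv]].
Qed.

End Separation.

Section Sufficiency.
Variables (R : realType) (K : fieldType) (absK : K -> R) (p : R).
Hypothesis hA : abs_value absK.
Hypothesis hp : 1 <= p.
Local Notation Y := (in_lp absK p).
Local Notation nrm := (lp_norm absK p).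
Variables (N : nat) (f : 'I_N -> nat -> nat) (w : 'I_N -> nat -> K).
Hypothesis hf : forall i, pseudo_shift_data absK (f i) (w i).
Local Notation T i := (pseudo_shift (f i) (w i)).
Local Notation W i := (Wprod (f i) (w i)).
Local Notation Sinv j := (shift_rinv (f j) (w j)).
Let hY := lp_seminormed_subgroup hA hp.

Section Stage.
Variables (k n : nat) (y : nat -> K) (B : nat).
Hypothesis hsep : separating absK f w k.+1 k.+1%:R k.+1%:R^-1 n.
Hypothesis hBk : (B <= k)%N.
Hypothesis hy : forall t, (B <= t)%N -> y t = 0.

Lemma shift_rinv_nrm_le j :
  nrm (Sinv j n y) <= (\sum_(a < B) absK (y a)) / k.+1%:R.
Proof.
rewrite (shift_rinv_decomp (hf j) _ hy) mulr_suml.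
apply: (nrm_sum_le hY) => [a|a]; first exact: (proj1 (single_lp hA hp _ _)).
rewrite (proj2 (single_lp hA hp _ _)) (absM hA) (absV hA) ler_wpM2l ?(abs_ge0 hA) //.
have hW := hsep.1 j a (leq_trans (ltn_ord a) (leq_trans hBk (leqnSn k))).
by rewrite lef_pV2 ?posrE ?ltW // (lt_trans _ hW).
Qed.

Lemma cross_shift_rinv_nrm_le i j : i != j ->
  nrm (iter n (T i) (Sinv j n y)) <= (\sum_(a < B) absK (y a)) / k.+1%:R.
Proof.
move=> hij; have [hdisj hratio] := hsep.2 i j hij.
rewrite (shift_rinv_decomp (hf j) _ hy) mulr_suml.
rewrite (morph_add_sum (morph_add_iter (pseudo_shift_morph_add _ _) _)).
have hak (a : 'I_B) : (a < k.+1)%N := leq_trans (ltn_ord a) (leq_trans hBk (leqnSn k)).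
pose c (a : 'I_B) := y a / W j a n.
have hz (a : 'I_B) : Y (iter n (T i) (single (iter n (f j) a) (c a))) /\
    nrm (iter n (T i) (single (iter n (f j) a) (c a))) <= absK (y a) / k.+1%:R.
  case: (pselect (exists m, iter n (f i) m = iter n (f j) a)) => [[m hm]|hno].
    rewrite -hm; have [hmY ->] := iter_pseudo_shift_single_hit hA hp (hf i) n m (c a).
    split=> //; rewrite /c mulrCA (absM hA) ler_wpM2l ?(abs_ge0 hA) // ltW //.
    apply: hratio (hak a) _ (esym hm); rewrite leqNgt; apply/negP => hmk.
    exact: hdisj a m (hak a) hmk (esym hm).
  rewrite iter_pseudo_shift_single_miss; last by move=> m hm; apply: hno; exists m.
  by split; [exact: (mem0 hY) | rewrite (nrm0 hY) divr_ge0 ?(abs_ge0 hA)].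
by apply: (nrm_sum_le hY) => a; case: (hz a).
Qed.

End Stage.

Lemma separating_seq_dhc_data n : separating_seq absK f w n ->
  dhc_data Y nrm (fun i => T i) n (fin_supp (K := K)) (fun=> fin_supp (K := K))
    (fun j k => Sinv j (n k)).
Proof.
move=> [hn hsep]; split=> //; split; first exact: fin_supp_dense.
split; first by move=> _; exact: fin_supp_dense.
split; first by move=> j k y hy; exact: shift_rinv_lp.
split.
  move=> i y [B hB]; apply/tends0E => e e0; apply: filterS (nbhs_infty_ge B) => k hk.
  rewrite (iter_pseudo_shift_supp (hf i)) ?(nrm0 hY) ?normr0 // => t ht.
  by apply: hB; apply: leq_trans hk (leq_trans (incr_seq_ge k hn) ht).
split.
  move=> j y [B hB]; apply: (tends0_le (C := \sum_(a < B) absK (y a))) => [k|].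
    exact: (nrm_ge0 hY).
  by apply: filterS (nbhs_infty_ge B) => k hk; exact: shift_rinv_nrm_le.
move=> i j y [B hB]; have [<- | hij] := eqVneq i j.
  apply/tends0E => e e0; apply: nearW => k.
  by rewrite (iter_shift_rinv (hf i)) ?subrr ?(nrm0 hY) ?normr0 //; exists B.
apply: (tends0_le (C := \sum_(a < B) absK (y a))) => [k|]; first exact: (nrm_ge0 hY).
apply: filterS (nbhs_infty_ge B) => k hk.
by rewrite subr0; exact: cross_shift_rinv_nrm_le.
Qed.

Lemma cond_iv_dhc_data : cond_iv absK f w -> exists n,
  dhc_data Y nrm (fun i => T i) n (fin_supp (K := K)) (fun=> fin_supp (K := K))
    (fun j k => Sinv j (n k)).
Proof. by case/cond_ivP=> n /separating_seq_dhc_data hD; exists n. Qed.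

End Sufficiency.

(** * d-weak mixing implies condition (iv) *)

Section Necessity.
Variables (R : realType) (K : fieldType) (absK : K -> R) (p : R).
Hypothesis hA : abs_value absK.
Hypothesis hp : 1 <= p.
Local Notation Y := (in_lp absK p).
Local Notation nrm := (lp_norm absK p).
Variables (N : nat) (f : 'I_N -> nat -> nat) (w : 'I_N -> nat -> K).
Local Notation T i := (pseudo_shift (f i) (w i)).
Local Notation W i := (Wprod (f i) (w i)).
Local Notation dY := (dsumY Y 2).
Local Notation dnrm := (dsum_nrm nrm 2).
Let hY := lp_seminormed_subgroup hA hp.
Let hdY := seminormed_subgroup_dsum hY 2.

(* [test_vec M i = (1_[M], (i+1) 1_[M])]: the second coordinate tells the indices apart. *)
Definition test_vec (M : nat) (i : 'I_N) : {ffun 'I_2 -> nat -> K} :=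
  [ffun c => fun t => if (t < M)%N then (if c == ord0 then 1 else (i : nat).+1%:R) else 0].

Lemma test_vec_mem M i : dY (test_vec M i).
Proof.
by move=> c; rewrite ffunE; apply: (fin_supp_lp hA hp); exists M => t ht; rewrite ltnNge ht.
Qed.

Lemma abs_le_dsum_nrm (z : {ffun 'I_2 -> nat -> K}) c t : dY z -> absK (z c t) <= dnrm z.
Proof. by move=> hz; apply: le_trans (abs_le_lp_norm hA hp t (hz c)) (dsum_nrm_ge nrm z c). Qed.

Lemma d_weakly_mixing_orbit M (del eta : R) : 0 < del -> 0 < eta ->
  d_weakly_mixing Y nrm (fun i => T i) ->
  exists2 n, (0 < n)%N & exists y : {ffun 'I_2 -> nat -> K},
    (forall c t, absK (y c t) <= del) /\
    forall c i m, absK (W i m n * y c (iter n (f i) m) - test_vec M i c m) < eta.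
Proof.
move=> del0 eta0 hdw; have zY : dY 0 := mem0 hdY.
have [n [n0 [y [[yY yd] hU]]]] := hdw _ _ (openY_ballY hdY del zY)
  (ballY_neq0 hdY zY del0) (fun i => openY_ballY hdY eta (test_vec_mem M i))
  (fun i => ballY_neq0 hdY (test_vec_mem M i) eta0).
exists n => //; exists y; split=> [c t|c i m].
  by rewrite subr0 in yd; apply: ltW; apply: le_lt_trans (abs_le_dsum_nrm c t yY) yd.
have [hTy hd] := hU i; apply: le_lt_trans hd.
apply: le_trans (abs_le_dsum_nrm c m (memB hdY hTy (test_vec_mem M i))).
by rewrite iter_dsum_op !ffunE /= -iter_pseudo_shift.
Qed.

Lemma d_weakly_mixing_separating M L eps : (0 < M)%N -> 0 <= L -> 0 < eps -> eps <= 1 ->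
  d_weakly_mixing Y nrm (fun i => T i) ->
  exists2 n, (0 < n)%N & separating absK f w M L eps n.
Proof.
move=> M0 L0 eps0 eps1 hdw.
pose eta := eps / (2 * N%:R + 6).
have hden : 0 < 2 * N%:R + 6 :> R by rewrite ltr_wpDl // mulr_ge0.
have eta0 : 0 < eta by rewrite divr_gt0.
have etaN : eta * (2 * N%:R + 6) = eps by rewrite /eta divfK // gt_eqF.
have N0 : 0 <= N%:R :> R := ler0n R N.
have eta_half : eta <= 2^-1 by rewrite /eta ler_pdivrMr //; lra.
have eta_eps : 2 * eta <= eps by rewrite -etaN; nra.
have del0 : 0 < (2 * (L + 1))^-1 by rewrite invr_gt0 mulr_gt0 // ltr_pwDr.
have [n n0 [y [hy hP]]] := d_weakly_mixing_orbit M del0 eta0 hdw.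
have hP1 c i m : (m < M)%N ->
    absK (W i m n * y c (iter n (f i) m) - (if c == ord0 then 1 else (i : nat).+1%:R)) < eta.
  by move=> hm; have := hP c i m; rewrite ffunE hm.
exists n => //; split=> [i m hm|i l hil].
  by apply: (abs_gt_of_mul_near1 hA L0 eta_half _ (hy ord0 _)); exact: hP1.
split=> [a b ha hb hab|a b ha hb hab].
  have hl0 := hP1 ord0 l a ha; have hl1 := hP1 ord_max l a ha.
  have hi0 := hP1 ord0 i b hb; have hi1 := hP1 ord_max i b hb.
  rewrite /= -hab in hi0 hi1; rewrite /= in hl1.
  have hc (j : 'I_N) : absK ((j : nat).+1%:R : K) <= N%:R by rewrite (abs_nat hA) ler_nat.
  have eta1 : eta <= 1 by lra.
  set t := iter n (f l) a in hl0 hl1 hi0 hi1.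
  have habcd : W l a n * y ord0 t * (W i b n * y ord_max t) =
    W i b n * y ord0 t * (W l a n * y ord_max t) by ring.
  have := abs_subr_lt_of_mul_eq hA habcd hl0 hi0 hl1 hi1 (hc i) (hc l) eta1.
  have hil' : (i : nat).+1 != (l : nat).+1 by rewrite eqSS.
  have := abs_natB_ge1 hA hil'.
  have : eta * (2 * N%:R + 4) < 1 by move: etaN; nra.
  lra.
have h1 := hP1 ord0 l a ha; have h2 := hP ord0 i b.
rewrite ffunE ltnNge hb subr0 /= -hab in h2.
exact: lt_le_trans (abs_div_lt_of_mul_near hA eta_half h1 h2) eta_eps.
Qed.

Lemma d_weakly_mixing_separating_seq : (0 < N)%N ->
  d_weakly_mixing Y nrm (fun i => T i) -> exists n, separating_seq absK f w n.
Proof.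
move=> N0 hdw; pose i0 : 'I_N := Ordinal N0.
suff hstep k m : exists2 n, (m < n)%N & separating absK f w k.+1 k.+1%:R k.+1%:R^-1 n.
  by have [n hn] := incr_seq_choice hstep; exists n.
(* a threshold above [|W i0 0 n'|] for all [n' <= m] forces an index [n > m] *)
pose L := Num.max k.+1%:R (\big[Num.max/0]_(n' < m.+1) absK (W i0 0%N n')).
have L0 : 0 <= L by rewrite le_max ler0n.
have ek0 : 0 < k.+1%:R^-1 :> R by rewrite invr_gt0.
have ek1 : k.+1%:R^-1 <= 1 :> R by rewrite invf_le1 ?ler1n.
have [n _ [hW hsep]] := d_weakly_mixing_separating (ltn0Sn k) L0 ek0 ek1 hdw.
exists n; last by split=> // i m' hm'; apply: le_lt_trans (hW i m' hm'); rewrite le_max lexx.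
rewrite ltnNge; apply/negP => hnm; have := hW i0 0%N (ltn0Sn k); apply/negP.
rewrite -leNgt le_max; apply/orP; right.
exact: (le_bigmax _ (fun n' : 'I_m.+1 => absK (W i0 0%N n')) (Ordinal (hnm : (n < m.+1)%N))).
Qed.

End Necessity.

Theorem theorem2p8 (R : realType) (K : fieldType) (absK : K -> R)
    (hK : is_R_or_C absK)
    (p : R) (N : nat) (f : 'I_N -> nat -> nat) (w : 'I_N -> nat -> K) :
  1 <= p -> (2 <= N)%N ->
  (forall i, pseudo_shift_data absK (f i) (w i)) ->
  let T := fun i => pseudo_shift (f i) (w i) in
  let Y := in_lp absK p in
  let nrm := lp_norm absK p in
  [<-> d_weakly_mixing Y nrm T;
       DHC Y nrm T;
       forall r : nat, (0 < r)%N ->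
         DBC (dsumY Y r) (dsum_nrm nrm r) (fun i => dsum_op r (T i));
       cond_iv absK f w].
Proof.
move=> hp hN hf T Y nrm.
have hA := is_R_or_C_abs_value hK.
have hY := lp_seminormed_subgroup hA hp.
have hTadd i : {morph T i : x y / x + y} := pseudo_shift_morph_add (f i) (w i).
have hTY i : forall x, Y x -> Y (T i x) := pseudo_shift_lp hA hp (hf i).
have iv_dhc := cond_iv_dhc_data hA hp hf.
have i_iv : d_weakly_mixing Y nrm T -> cond_iv absK f w.
  by move=> /(d_weakly_mixing_separating_seq hA hp (ltnW hN)) [n /separating_seq_cond_iv].
have ii_i : DHC Y nrm T -> d_weakly_mixing Y nrm T := DHC_d_weakly_mixing hY hTadd hTY.
have iv_ii : cond_iv absK f w -> DHC Y nrm T.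
  by case/iv_dhc=> n hD; apply/DHCP; do 4!eexists; exact: hD.
have iv_iii : cond_iv absK f w -> forall r, (0 < r)%N ->
    DBC (dsumY Y r) (dsum_nrm nrm r) (fun i => dsum_op r (T i)).
  by case/iv_dhc=> n hD r _; exact: (dhc_data_DBC_dsum hY hTadd hTY r hD).
have iii_i : (forall r, (0 < r)%N ->
    DBC (dsumY Y r) (dsum_nrm nrm r) (fun i => dsum_op r (T i))) -> d_weakly_mixing Y nrm T.
  by move=> /(_ 2%N isT); exact: DBC_d_weakly_mixing.
tfae=> [/i_iv/iv_ii | /ii_i/i_iv/iv_iii | /iii_i/i_iv | /iv_ii/ii_i] //.
Qed.
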